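(* Let $q\geq r$ be positive integers with $r>\frac{2q}{3}$. Then $F_{q,r}(n)=G_{q,r}(n)$ for every positive integer $n$.
   Context: $[n]=\{1,\dots,n\}$. For $x,y\in\mathbb{R}^q$, write $x<_r y$ if there are at least $r$ coordinates $i\in[q]$ with $x_i<y_i$. $F_{q,r}(n)$ is the maximum $N$ such that there exist $x_1,\dots,x_N\in[n]^q$ with $x_a<_r x_b$ for all $1\leq a<b\leq N$. $G_{q,r}(n)$ is the maximum size of a set $S\subseteq[n]^q$ such that for all distinct $x,y\in S$, either $x<_r y$ or $y<_r x$. *)

From mathcomp Require Import all_boot.
Set Implicit Arguments. Unset Strict Implicit. Unset Printing Implicit Defensive.

(* A point of [n]^q is a finite function 'I_q -> 'I_n ; the value k : 'I_n
   represents the integer k+1 in [n] = {1,...,n} (a shift preserving order). *)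
Definition point (q n : nat) := {ffun 'I_q -> 'I_n}.

Definition ltr (q n r : nat) (x y : point q n) : bool :=
  r <= #|[set i : 'I_q | x i < y i]|.

Definition rchain (q n r : nat) (s : seq (point q n)) : bool :=
  pairwise (@ltr q n r) s.

Definition rcomparable (q n r : nat) (S : {set point q n}) : bool :=
  [forall x in S, forall y in S, (x != y) ==> (ltr r x y || ltr r y x)].

Definition is_F (q r n N : nat) : Prop :=
  (exists s : seq (point q n), rchain r s /\ size s = N) /\
  (forall s : seq (point q n), rchain r s -> size s <= N).

Definition is_G (q r n N : nat) : Prop :=
  (exists S : {set point q n}, rcomparable r S /\ #|S| = N) /\
  (forall S : {set point q n}, rcomparable r S -> #|S| <= N).

(* Three subsets of a q-set of sizes at least r > 2q/3 have a common element,
   so the relation <_r on [n]^q has no cycle x <_r y <_r z <_r x.  A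
   <_r-comparable set on which <_r has no 3-cycle is ordered by the
   reflexive closure of <_r, and listing it in that order gives a <_r-chain;
   conversely the entries of a chain form a comparable set of the same size. *)
From mathcomp Require Import all_boot.
From mathcomp Require Import zify.

Set Implicit Arguments.
Unset Strict Implicit.
Unset Printing Implicit Defensive.

Lemma three_sets_meet (T : finType) (A B C : {set T}) :
  2 * #|T| < #|A| + #|B| + #|C| -> exists x, x \in A :&: B :&: C.
Proof.
move=> big.
have cardAB := cardsUI A B; have cardABC := cardsUI (A :&: B) C.
have leAB : #|A :|: B| <= #|T| by apply: max_card.
have leABC : #|A :&: B :|: C| <= #|T| by apply: max_card.
have : 0 < #|A :&: B :&: C| by lia.
by rewrite card_gt0 => /set0Pn.
Qed.

Lemma ltr_no_3cycle (q n r : nat) : 2 * q < 3 * r ->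
  forall x y z : point q n, ltr r x y -> ltr r y z -> ltr r z x -> False.
Proof.
rewrite /ltr => r_big x y z xy yz zx.
have [|i] := three_sets_meet (A := [set i | x i < y i]) (B := [set i | y i < z i])
  (C := [set i | z i < x i]).
  by rewrite card_ord; apply: leq_trans (leq_add (leq_add xy yz) zx); lia.
by rewrite !inE => /andP[/andP[]]; lia.
Qed.

Definition comparable_set (T : finType) (R : rel T) (S : {set T}) : bool :=
  [forall x in S, forall y in S, (x != y) ==> (R x y || R y x)].

Lemma pairwise_comparable_set (T : finType) (R : rel T) (s : seq T) :
  pairwise R s -> comparable_set R [set x in s].
Proof.
suff cmp : pairwise R s -> forall x y, x \in s -> y \in s -> x != y -> R x y || R y x.
  move=> /cmp Rs; apply/forall_inP => x; rewrite inE => xs.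
  by apply/forall_inP => y; rewrite inE => ys; apply/implyP; apply: Rs.
elim: s => [//|a s IHs] /= /andP[/allP Ra Rs] x y.
rewrite !inE => /predU1P[-> | xs] /predU1P[-> | ys]; rewrite ?eqxx //.
- by rewrite Ra.
- by rewrite Ra ?orbT.
- exact: IHs.
Qed.

Lemma card_set_pairwise (T : finType) (R : rel T) (s : seq T) :
  irreflexive R -> pairwise R s -> #|[set x in s]| = size s.
Proof. by move=> R_irr /(pairwise_uniq R_irr) /card_uniqP <-; rewrite cardsE. Qed.

Lemma exists_max_card (T : finType) (P : pred {set T}) :
  P set0 -> exists2 S, P S & forall S', P S' -> #|S'| <= #|S|.
Proof.
move=> P0; case: (arg_maxnP (fun S : {set T} => #|S|) P0) => S PS maxS.
by exists S.
Qed.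

Section ThreeCycleFree.

Variables (T : finType) (R : rel T).
Hypothesis no_3cycle : forall x y z, R x y -> R y z -> R z x -> False.

Lemma no_3cycle_irr : irreflexive R.
Proof. by move=> x; apply/negbTE/negP => Rxx; apply: (no_3cycle Rxx Rxx Rxx). Qed.

Let leR x y := (x == y) || R x y.

Lemma leR_trans_in (S : {set T}) : comparable_set R S -> {in S & &, transitive leR}.
Proof.
move=> /forall_inP cmpS y x z yS xS zS; rewrite /leR.
case: (eqVneq x y) => [-> // | _] /=; case: (eqVneq y z) => [<- -> | _ Rxy Ryz].
  by rewrite orbT.
case: (eqVneq x z) => //= neq_xz.
have /orP[// | Rzx] := implyP (forall_inP (cmpS x xS) z zS) neq_xz.
by case: (no_3cycle Rxy Ryz Rzx).
Qed.

Lemma leR_total_in (S : {set T}) : comparable_set R S -> {in S &, total leR}.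
Proof.
move=> /forall_inP cmpS x y xS yS; rewrite /leR.
case: (eqVneq x y) => [// | neq_xy] /=.
by case/orP: (implyP (forall_inP (cmpS x xS) y yS) neq_xy) => ->; rewrite ?orbT.
Qed.

Lemma comparable_set_chain (S : {set T}) :
  comparable_set R S -> exists s, pairwise R s /\ size s = #|S|.
Proof.
move=> cmpS; have allS : all (mem S) (enum S) by apply/allP => x; rewrite mem_enum.
have perm_s : perm_eq (sort leR (enum S)) (enum S) by rewrite perm_sort.
have all_s : all (mem S) (sort leR (enum S)) by rewrite (perm_all _ perm_s).
exists (sort leR (enum S)); split; last by rewrite (perm_size perm_s) cardE.
have sorted_s := sort_sorted_in (leR_total_in cmpS) allS.
apply: (sub_pairwise (r := [rel x y | (x != y) && leR x y])).
  by move=> x y /andP[/negbTE neq_xy]; rewrite /leR neq_xy.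
rewrite pairwise_relI -uniq_pairwise (perm_uniq perm_s) enum_uniq.
by rewrite -(sorted_pairwise_in (leR_trans_in cmpS) all_s).
Qed.

End ThreeCycleFree.

Theorem proposition1p3 (q r : nat) :
  0 < r -> r <= q -> 2 * q < 3 * r ->
  forall n : nat, 0 < n ->
  exists N : nat, is_F q r n N /\ is_G q r n N.
Proof.
move=> _ _ r_big n _.
have no_3cycle := ltr_no_3cycle (n := n) r_big.
have cmp0 : rcomparable r (set0 : {set point q n}) by apply/forall_inP => x; rewrite inE.
have [S0 cmpS0 maxS0] := exists_max_card cmp0.
exists #|S0|; split; split.
- exact: comparable_set_chain no_3cycle S0 cmpS0.
- move=> s chain_s; rewrite -(card_set_pairwise (no_3cycle_irr no_3cycle) chain_s).
  exact/maxS0/pairwise_comparable_set.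
- by exists S0.
- exact: maxS0.
Qed.
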